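(* Let $B$ be a crystal, $b\in B$ and $b_\mu\in B_S$ such that $\mathrm{wt}(b)+\mathrm{wt}(b_\mu)\in P_+$. Then for every sequence $i_1,\dots,i_r\in\{1,\dots,n\}$, $\tilde e_{i_r}\cdots\tilde e_{i_1}b_\mu\ne0$ implies $\tilde f_{i_r}\cdots\tilde f_{i_1}b\neq0$.
   Context: Let $\mathfrak g$ be of type $D_n$, weights $(\lambda_1,\dots,\lambda_n)$ in an orthonormal basis $\epsilon_j$, simple roots $\alpha_j=\epsilon_j-\epsilon_{j+1}$ ($j<n$), $\alpha_n=\epsilon_{n-1}+\epsilon_n$, $P_+$ the dominant integral weights ($\lambda_j\in\frac12\mathbb Z$, $\lambda_j-\lambda_k\in\mathbb Z$, $\lambda_1\ge\dots\ge\lambda_n$, $\lambda_{n-1}+\lambda_n\ge0$). A crystal means a normal crystal whose connected components are Kashiwara crystals $B_\lambda$ of irreducible $U_q(\mathfrak g)$-modules; in particular $\varepsilon_i(b)=\max\{k:\tilde e_i^kb\ne0\}$, $\varphi_i(b)=\max\{k:\tilde f_i^kb\ne0\}$ and $\varphi_i(b)-\varepsilon_i(b)=\langle\mathrm{wt}(b),\alpha_i^\vee\rangle$. The spinor crystal $B_S$: sign vectors $(i_1,\dots,i_n)$ of weight $\frac12\sum i_j\epsilon_j$; for $j<n$, $\tilde f_j$ turns $(i_j,i_{j+1})=(+,-)$ into $(-,+)$ (else $0$), $\tilde e_j$ the reverse; $\tilde f_n$ turns $(i_{n-1},i_n)=(+,+)$ into $(-,-)$ (else $0$), $\tilde e_n$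 the reverse. *)

(* Conventions: the index set {1,...,n} of simple roots is 'I_n, where the
   ordinal i stands for alpha_{i+1}.  Weights are maps nat -> rat; the value at
   j (0-based, j < n) is the coordinate lambda_{j+1} in the basis epsilon. *)
From mathcomp Require Import all_boot all_order all_algebra.
Set Implicit Arguments. Unset Strict Implicit. Unset Printing Implicit Defensive.
Import Order.TTheory GRing.Theory Num.Theory.
Local Open Scope ring_scope.

Definition weight := nat -> rat.

(* <lambda, alpha_i^vee> (type D is simply laced, alpha_i^vee = alpha_i) *)
Definition pairing (n : nat) (lam : weight) (i : 'I_n) : rat :=
  if (i.+1 < n)%N then lam i - lam i.+1
  else lam (n - 2)%N + lam (n - 1)%N.

Definition alpha (n : nat) (i : 'I_n) : weight := fun j =>
  if (i.+1 < n)%N then (j == i)%:R - (j == i.+1)%:R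
  else (j == (n - 2)%N)%:R + (j == (n - 1)%N)%:R.

Definition dominant (n : nat) (lam : weight) : Prop :=
  [/\ (forall j, (j < n)%N -> exists z : int, 2%:R * lam j = z%:~R),
      (forall j k, (j < n)%N -> (k < n)%N -> exists z : int, lam j - lam k = z%:~R),
      (forall j, (j.+1 < n)%N -> lam j.+1 <= lam j)
    & 0 <= lam (n - 2)%N + lam (n - 1)%N].

(* A (pre)crystal: carrier, weight map, and partial Kashiwara operators
   (None plays the role of 0). *)
Record precrystal (n : nat) := Precrystal {
  pc_carrier :> Type;
  pc_wt : pc_carrier -> weight;
  pc_e : 'I_n -> pc_carrier -> option pc_carrier;
  pc_f : 'I_n -> pc_carrier -> option pc_carrier }.

Definition oiter (T : Type) (k : nat) (g : T -> option T) (x : T) : option T :=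
  iter k (fun o => obind g o) (Some x).

(* g_{i_r} ... g_{i_1} x  for s = [:: i_1; ...; i_r] *)
Definition oseq (n : nat) (T : Type) (g : 'I_n -> T -> option T)
    (s : seq 'I_n) (x : T) : option T :=
  foldl (fun o i => obind (g i) o) (Some x) s.

(* a sign vector (i_1,...,i_n) is an n-tuple of booleans, true = + *)
Definition spin_wt (n : nat) (s : n.-tuple bool) : weight := fun j =>
  if (j < n)%N then (if nth false s j then 2%:R^-1 else - 2%:R^-1) else 0.

Definition spin_upd (n : nat) (s : n.-tuple bool) (p q : nat) (x y : bool)
  : n.-tuple bool :=
  [tuple (if (k : nat) == p then x else if (k : nat) == q then y else tnth s k)
     | k < n].

Definition spin_f (n : nat) (i : 'I_n) (s : n.-tuple bool) : option (n.-tuple bool) :=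
  if (i.+1 < n)%N then
    (if nth false s i && ~~ nth false s i.+1
     then Some (spin_upd s i i.+1 false true) else None)
  else
    (if nth false s (n - 2) && nth false s (n - 1)
     then Some (spin_upd s (n - 2) (n - 1) false false) else None).

Definition spin_e (n : nat) (i : 'I_n) (s : n.-tuple bool) : option (n.-tuple bool) :=
  if (i.+1 < n)%N then
    (if ~~ nth false s i && nth false s i.+1
     then Some (spin_upd s i i.+1 true false) else None)
  else
    (if ~~ nth false s (n - 2) && ~~ nth false s (n - 1)
     then Some (spin_upd s (n - 2) (n - 1) true true) else None).

Definition Spinor (n : nat) : precrystal n :=
  @Precrystal n (n.-tuple bool) (@spin_wt n) (@spin_e n) (@spin_f n).

(* A word x :: w stands for x (x) w; the tensor product rule used is the
   (Bump--Schilling) signature rule.  The words of length k form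
   B_S^{(x) k}. *)
Definition sp_eps (n : nat) (i : 'I_n) (x : n.-tuple bool) : nat :=
  if spin_e i x is Some _ then 1 else 0.
Definition sp_phi (n : nat) (i : 'I_n) (x : n.-tuple bool) : nat :=
  if spin_f i x is Some _ then 1 else 0.

Fixpoint w_phi (n : nat) (i : 'I_n) (w : seq (n.-tuple bool)) : nat :=
  match w with
  | [::] => 0
  | x :: w' => sp_phi i x + (w_phi i w' - sp_eps i x)
  end.
Fixpoint w_eps (n : nat) (i : 'I_n) (w : seq (n.-tuple bool)) : nat :=
  match w with
  | [::] => 0
  | x :: w' => w_eps i w' + (sp_eps i x - w_phi i w')
  end.

Fixpoint w_f (n : nat) (i : 'I_n) (w : seq (n.-tuple bool))
  : option (seq (n.-tuple bool)) :=
  match w with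
  | [::] => None
  | x :: w' =>
      if (w_phi i w' <= sp_eps i x)%N then omap (fun x' => x' :: w') (spin_f i x)
      else omap (fun w'' => x :: w'') (w_f i w')
  end.

Fixpoint w_e (n : nat) (i : 'I_n) (w : seq (n.-tuple bool))
  : option (seq (n.-tuple bool)) :=
  match w with
  | [::] => None
  | x :: w' =>
      if (w_phi i w' < sp_eps i x)%N then omap (fun x' => x' :: w') (spin_e i x)
      else omap (fun w'' => x :: w'') (w_e i w')
  end.

Definition w_wt (n : nat) (w : seq (n.-tuple bool)) : weight := fun j =>
  \sum_(x <- w) spin_wt x j.

Definition Words (n : nat) : precrystal n :=
  @Precrystal n (seq (n.-tuple bool)) (@w_wt n) (@w_e n) (@w_f n).

Inductive reach (n : nat) (B : precrystal n) (b : B) : B -> Prop :=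
| reach_refl : reach b b
| reach_e (c d : B) (i : 'I_n) : reach b c -> @pc_e n B i c = Some d -> reach b d
| reach_f (c d : B) (i : 'I_n) : reach b c -> @pc_f n B i c = Some d -> reach b d.

Definition comp_iso (n : nat) (B C : precrystal n) (b : B) (c : C) : Prop :=
  exists g : B -> C,
    g b = c /\
    [/\ (forall x, reach b x -> forall j, (j < n)%N -> @pc_wt n C (g x) j = @pc_wt n B x j),
        (forall x i, reach b x -> @pc_e n C i (g x) = omap g (@pc_e n B i x)),
        (forall x i, reach b x -> @pc_f n C i (g x) = omap g (@pc_f n B i x)),
        (forall x y, reach b x -> reach b y -> g x = g y -> x = y)
      & (forall y, reach c y -> exists2 x, reach b x & g x = y)].

(* A crystal: a normal crystal (epsilon_i, phi_i are the string lengths and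
   phi_i - epsilon_i = <wt, alpha_i^vee>) each of whose connected components is
   a crystal B_lambda of an irreducible module, B_lambda being realized as a
   connected component of a tensor power B_S^{(x) k} of the spinor crystal. *)
Definition is_crystal (n : nat) (B : precrystal n) : Prop :=
  [/\ (forall i (x y : B), @pc_f n B i x = Some y <-> @pc_e n B i y = Some x),
      (forall i (x y : B), @pc_f n B i x = Some y ->
          forall j, (j < n)%N -> @pc_wt n B y j = @pc_wt n B x j - alpha i j),
      (forall i (x : B), exists k l : nat,
          [/\ oiter k (@pc_e n B i) x <> None, oiter k.+1 (@pc_e n B i) x = None,
              oiter l (@pc_f n B i) x <> None, oiter l.+1 (@pc_f n B i) x = None
            & l%:R - k%:R = pairing (@pc_wt n B x) i])
    & (forall x : B, exists w : Words n, comp_iso x w)].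

(* Along the two strings, wt(c) + wt(b') stays equal to lambda := wt(b) + wt(b_mu),
   since each step lowers wt(c) and raises wt(b') by the same simple root alpha_i.
   Whenever e_i acts on a spinor b' we have <wt(b'), alpha_i^vee> = -1, so dominance
   of lambda forces <wt(c), alpha_i^vee> >= 1, hence phi_i(c) >= 1 and f_i c <> 0. *)
From mathcomp Require Import all_boot all_order all_algebra.
From mathcomp Require Import ring lra zify.
Set Implicit Arguments. Unset Strict Implicit. Unset Printing Implicit Defensive.
Import Order.TTheory GRing.Theory Num.Theory.
Local Open Scope ring_scope.

Lemma eq_pairing n (hn : (2 <= n)%N) (i : 'I_n) (a b : weight) :
  (forall j, (j < n)%N -> a j = b j) -> pairing a i = pairing b i.
Proof. by move=> eq_ab; rewrite /pairing; case: ifP => lt_i1n; rewrite !eq_ab //; lia. Qed.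

Lemma pairingD n (i : 'I_n) (a b : weight) :
  pairing (fun j => a j + b j) i = pairing a i + pairing b i.
Proof. by rewrite /pairing; case: ifP => _; ring. Qed.

Lemma pairing_dominant_ge0 n (i : 'I_n) (lam : weight) :
  dominant n lam -> 0 <= pairing lam i.
Proof.
by case=> _ _ lam_dec lam_last; rewrite /pairing; case: ifP => // /lam_dec; rewrite subr_ge0.
Qed.

Lemma nth_spin_upd n (s : n.-tuple bool) p q x y k : (k < n)%N ->
  nth false (spin_upd s p q x y) k =
  if k == p then x else if k == q then y else nth false s k.
Proof.
move=> lt_kn; rewrite -[k]/(nat_of_ord (Ordinal lt_kn)) -tnth_nth.
by rewrite /spin_upd tnth_mktuple (tnth_nth false).
Qed.

Lemma spin_wtE n (s : n.-tuple bool) j : (j < n)%N ->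
  spin_wt s j = if nth false s j then 2%:R^-1 else - 2%:R^-1.
Proof. by move=> lt_jn; rewrite /spin_wt lt_jn. Qed.

Section SpinorRaising.

Variables (n : nat) (i : 'I_n) (s s' : n.-tuple bool).
Hypotheses (hn : (2 <= n)%N) (e_s : spin_e i s = Some s').

Lemma spin_e_wt j : (j < n)%N -> spin_wt s' j = spin_wt s j + alpha i j.
Proof.
move=> lt_jn; rewrite !spin_wtE // /alpha.
move: e_s; rewrite /spin_e; case: ifP => lt_i1n.
  case: ifP => // /andP[/negbTE si si1] [<-]; rewrite nth_spin_upd //.
  have [->|_] := eqVneq j i; first by rewrite si eqn_leq ltnn andbF /=; field.
  have [->|_] := eqVneq j i.+1; first by rewrite si1 /=; field.
  by rewrite /= subrr addr0.
case: ifP => // /andP[/negbTE s_n2 /negbTE s_n1] [<-]; rewrite nth_spin_upd //.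
have [->|_] := eqVneq j (n - 2)%N.
  rewrite s_n2 /= (_ : ((n - 2)%N == (n - 1)%N) = false); last by apply/eqP; lia.
  by rewrite /= addr0; field.
have [->|_] := eqVneq j (n - 1)%N; first by rewrite s_n1 /=; field.
by rewrite /= addr0.
Qed.

Lemma pairing_spin_e : pairing (spin_wt s) i = -1.
Proof.
move: e_s; rewrite /spin_e /pairing; case: ifP => lt_i1n.
  by case: ifP => // /andP[/negbTE si si1] _; rewrite !spin_wtE // si si1; field.
case: ifP => // /andP[/negbTE s_n2 /negbTE s_n1] _.
by rewrite !spin_wtE ?s_n2 ?s_n1; [field | lia | lia].
Qed.

End SpinorRaising.

Lemma oiterS_head (T : Type) (g : T -> option T) x l :
  oiter l.+1 g x <> None -> g x <> None.
Proof.
elim: l => [//|l IHl] gl_x; apply: IHl => gl_None; apply: gl_x.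
by rewrite /oiter iterS -/(oiter l.+1 g x) gl_None.
Qed.

Lemma oseq_cons n (T : Type) (g : 'I_n -> T -> option T) i s x :
  oseq g (i :: s) x = if g i x is Some y then oseq g s y else None.
Proof. by rewrite /oseq /=; case: (g i x) => //; elim: s. Qed.

Lemma crystal_f_pairing_gt0 n (B : precrystal n) (i : 'I_n) (x : B) :
  is_crystal B -> 0 < pairing (@pc_wt n B x) i -> @pc_f n B i x <> None.
Proof.
case=> _ _ strings _ pos_x; have [k [[|l] [_ _ fl_x _ l_k]]] := strings i x.
  by move: pos_x; rewrite -l_k sub0r oppr_gt0 ltNge ler0n.
exact: oiterS_head fl_x.
Qed.

Lemma oseq_f_of_oseq_spin_e n (hn : (2 <= n)%N) (B : precrystal n)
    (HB : is_crystal B) (lam : weight) (lam_ge0 : forall i : 'I_n, 0 <= pairing lam i)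
    (s : seq 'I_n) (c : B) (b : n.-tuple bool) :
  (forall j, (j < n)%N -> @pc_wt n B c j + spin_wt b j = lam j) ->
  oseq (@pc_e n (Spinor n)) s b <> None -> oseq (@pc_f n B) s c <> None.
Proof.
have [_ f_wt _ _] := HB.
elim: s c b => [//|i s IHs] c b lam_cb; rewrite !oseq_cons /=.
case e_b: (spin_e i b) => [b'|//] es_b'.
have pairing_c : 0 < pairing (pc_wt c) i.
  have := lam_ge0 i; rewrite -(eq_pairing hn i lam_cb) pairingD.
  by rewrite (pairing_spin_e hn e_b); lra.
case f_c: (pc_f i c) => [c'|]; last by case: (crystal_f_pairing_gt0 HB pairing_c).
apply: IHs es_b' => j lt_jn.
by rewrite (f_wt _ _ _ f_c) // (spin_e_wt hn e_b) // -lam_cb //; ring.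
Qed.

Theorem corollary4p1 (n : nat) (hn : (4 <= n)%N) (B : precrystal n)
    (HB : is_crystal B) (b : B) (bmu : n.-tuple bool)
    (Hdom : dominant n (fun j => @pc_wt n B b j + spin_wt bmu j))
    (s : seq 'I_n) :
  oseq (@pc_e n (Spinor n)) s bmu <> None -> oseq (@pc_f n B) s b <> None.
Proof.
have hn2 : (2 <= n)%N by lia.
exact: (oseq_f_of_oseq_spin_e hn2 HB (fun i => pairing_dominant_ge0 i Hdom) (c := b) (b := bmu)).
Qed.
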